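(* Let $X$ be either $c_0$ or $\ell^p$ for some $1\le p<\infty$ (complex sequences indexed by $n\ge 0$). There exists a bounded sequence $w=(w_n)_{n\ge 0}$ of positive real numbers such that the weighted backward shift $B_w$ on $X$ is strongly topologically transitive but not mixing.
   Context: For a bounded sequence $w=(w_n)_{n\ge0}$ of positive numbers, the weighted backward shift $B_w$ on $X$ is the bounded linear operator defined on the canonical basis $(e_n)_{n\ge0}$ by $B_we_0=0$ and $B_we_n=w_ne_{n-1}$ for $n\ge1$. For an operator $T$ on a topological vector space $X$ and nonempty open sets $U,V\subseteq X$, let $N(U,V)=\{n\in\mathbb{N}_0: T^n(U)\cap V\neq\emptyset\}$. $T$ is mixing if $N(U,V)$ is cofinite for all nonempty open $U,V$. $T$ is strongly topologically transitive if for every nonempty open $U\subseteq X$, $X\setminus\{0\}\subseteq\bigcup_{n=0}^\infty T^n(U)$. *)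

From Stdlib Require Import Reals.
From Coquelicot Require Import Coquelicot.
Open Scope R_scope.

(* |a|^p for a >= 0, with the convention 0^p = 0 (Stdlib's Rpower 0 p = 1). *)
Definition rpow (a p : R) : R :=
  if Req_EM_T a 0 then 0 else Rpower a p.

Inductive seqspace : Type :=
  | c0 : seqspace
  | lp : R -> seqspace.

Definition inX (S : seqspace) (x : nat -> C) : Prop :=
  match S with
  | c0 => is_lim_seq (fun n => Cmod (x n)) 0
  | lp p => ex_series (fun n => rpow (Cmod (x n)) p)
  end.

Definition normX (S : seqspace) (x : nat -> C) : R :=
  match S with
  | c0 => real (Lub_Rbar (fun r => exists n, r = Cmod (x n)))
  | lp p => rpow (Series (fun n => rpow (Cmod (x n)) p)) (/ p)
  end.

Definition seq_sub (x y : nat -> C) : nat -> C := fun n => Cminus (x n) (y n).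

Definition openX (S : seqspace) (U : (nat -> C) -> Prop) : Prop :=
  (forall x, U x -> inX S x) /\
  (forall x, U x -> exists e, 0 < e /\
     forall y, inX S y -> normX S (seq_sub y x) < e -> U y).

Definition nonempty (U : (nat -> C) -> Prop) : Prop := exists x, U x.

(* Weighted backward shift: B_w e_0 = 0, B_w e_n = w_n e_{n-1},
   i.e. (B_w x)_m = w_{m+1} x_{m+1}. *)
Definition Bw (w : nat -> R) (x : nat -> C) : nat -> C :=
  fun m => Cmult (RtoC (w (S m))) (x (S m)).

Definition hits (T : (nat -> C) -> (nat -> C)) (U V : (nat -> C) -> Prop) (n : nat) : Prop :=
  exists x, U x /\ V (Nat.iter n T x).

Definition mixing (S : seqspace) (T : (nat -> C) -> (nat -> C)) : Prop :=
  forall U V, openX S U -> nonempty U -> openX S V -> nonempty V ->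
    exists N, forall n, (N <= n)%nat -> hits T U V n.

Definition strongly_tt (S : seqspace) (T : (nat -> C) -> (nat -> C)) : Prop :=
  forall U, openX S U -> nonempty U ->
    forall y, inX S y -> y <> (fun _ => RtoC 0) ->
      exists n x, U x /\ Nat.iter n T x = y.

(* Writing W m = w_1 ... w_m, one has (B_w^n x)_m = (W (m+n) / W m) x_(m+n).
   Hence B_w^n x = y is solved by any x whose coordinates beyond n are
   x_(n+m) = ratio n m * y_m, with ratio n m = W m / W (m+n), and whose first n
   coordinates are free (we copy them from a given u).
   - Strong transitivity: if the ratios are uniformly bounded and, for some
     shift n >= K, small on [0, K), then this solution lies close to u, since
     the tails of u and y are small; this is proved for c_0 and for l^p.
   - Not mixing: if W r <= W 0 for infinitely many r, then B_w^r never maps the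
     ball of radius 1/3 around 0 into the ball of radius 1/3 around e_0.
   - Construction: W m = 2^(profile m), where the integer profile is the upper
     envelope of "tents" of growing height and width. It grows by at most one per
     step (so w_k <= 2), returns to 0 at the end of each tent (non-mixing), and
     shifting by the width of the j-th tent lowers it by at most one while lifting
     an initial segment to height j (the ratio control).
   The file first collects facts on real powers, series and the spaces X, then
   proves the two criteria for a general profile W, then builds the profile. *)

From Stdlib Require Import Reals Lia Lra FunctionalExtensionality.
From Coquelicot Require Import Coquelicot.

Open Scope R_scope.

Lemma rpow_nonneg a q : 0 <= rpow a q.
Proof. unfold rpow. destruct (Req_EM_T a 0); [lra|]. left; apply exp_pos. Qed.

Lemma rpow_0 q : rpow 0 q = 0.
Proof. unfold rpow. destruct (Req_EM_T 0 0); [lra|congruence]. Qed.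

Lemma rpow_of_pos a q : 0 < a -> rpow a q = Rpower a q.
Proof. intros. unfold rpow. destruct (Req_EM_T a 0); [lra|auto]. Qed.

Lemma rpow_pos a q : 0 < a -> 0 < rpow a q.
Proof. intros Ha. rewrite rpow_of_pos by exact Ha. apply exp_pos. Qed.

Lemma rpow_lt a b q : 0 < q -> 0 <= a < b -> rpow a q < rpow b q.
Proof.
  intros Hq [Ha Hab]. rewrite (rpow_of_pos b) by lra.
  destruct (Req_dec a 0) as [->|Hn].
  - rewrite rpow_0. apply exp_pos.
  - rewrite rpow_of_pos by lra. apply Rlt_Rpower_l; lra.
Qed.

Lemma rpow_le a b q : 0 < q -> 0 <= a <= b -> rpow a q <= rpow b q.
Proof.
  intros Hq [Ha [Hab|<-]]; [left; apply rpow_lt; lra|lra].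
Qed.

Lemma rpow_mult a b q : 0 <= a -> 0 <= b -> rpow (a * b) q = rpow a q * rpow b q.
Proof.
  intros Ha Hb. destruct (Req_dec a 0) as [->|Hna]; [rewrite Rmult_0_l, !rpow_0; lra|].
  destruct (Req_dec b 0) as [->|Hnb]; [rewrite Rmult_0_r, !rpow_0; lra|].
  rewrite !rpow_of_pos by nra. symmetry; apply Rpower_mult_distr; lra.
Qed.

Lemma rpow_inv a q : 0 < q -> 0 <= a -> rpow (rpow a q) (/ q) = a.
Proof.
  intros Hq Ha. destruct (Req_dec a 0) as [->|Hn]; [rewrite !rpow_0; auto|].
  rewrite (rpow_of_pos a), rpow_of_pos by (lra || apply exp_pos).
  rewrite Rpower_mult. replace (q * / q) with 1 by (field; lra). apply Rpower_1; lra.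
Qed.

Lemma rpow_le_base a p : 1 <= p -> 0 <= a <= 1 -> rpow a p <= a.
Proof.
  intros Hp [Ha Ha1]. destruct (Req_dec a 0) as [->|Hn]; [rewrite rpow_0; lra|].
  rewrite rpow_of_pos by lra. unfold Rpower.
  assert (Hln : ln a <= 0) by (rewrite <- ln_1; apply ln_le; lra).
  rewrite <- (exp_ln a) at 2 by lra.
  assert (Hle : p * ln a <= ln a) by nra.
  destruct Hle as [Hlt | ->]; [left; apply exp_increasing; exact Hlt|lra].
Qed.

Lemma rpow_add_le a b p : 0 < p -> 0 <= a -> 0 <= b ->
  rpow (a + b) p <= rpow 2 p * (rpow a p + rpow b p).
Proof.
  intros Hp Ha Hb.
  assert (Hmax : 0 <= Rmax a b) by (apply (Rle_trans _ a); [lra|apply Rmax_l]).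
  assert (Hle : rpow (a + b) p <= rpow 2 p * rpow (Rmax a b) p).
  { rewrite <- rpow_mult by lra. apply rpow_le; [lra|].
    pose proof (Rmax_l a b); pose proof (Rmax_r a b). lra. }
  assert (rpow (Rmax a b) p <= rpow a p + rpow b p).
  { pose proof (rpow_nonneg a p); pose proof (rpow_nonneg b p).
    unfold Rmax; destruct (Rle_dec a b); lra. }
  pose proof (rpow_pos 2 p ltac:(lra)). nra.
Qed.

Lemma mul_frac_le a e : 0 <= a -> 0 <= e -> a * (e / (a + 1)) <= e.
Proof.
  intros Ha He. apply (Rmult_le_reg_r (a + 1)); [lra|].
  unfold Rdiv. rewrite Rmult_assoc, (Rmult_assoc e), Rinv_l by lra. nra.
Qed.

Lemma ex_series_zero : ex_series (fun _ : nat => 0).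
Proof.
  exists 0. apply is_series_Reals. intros eps Heps. exists 0%nat. intros n _.
  assert (Hsum : sum_f_R0 (fun _ => 0) n = 0).
  { induction n as [|n IH]; simpl; [lra|rewrite IH; lra]. }
  unfold Rdist. rewrite Hsum, Rminus_0_r, Rabs_R0. exact Heps.
Qed.

Lemma Series_nonneg (a : nat -> R) : (forall k, 0 <= a k) -> ex_series a -> 0 <= Series a.
Proof.
  intros Ha Hex.
  assert (Hzero : Series (fun _ => 0) = 0).
  { rewrite (Series_ext (fun _ => 0) (fun n => 0 * a n)) by (intros; ring).
    rewrite Series_scal_l. ring. }
  rewrite <- Hzero. apply Series_le; auto. intros; split; [lra|auto].
Qed.

Lemma term_le_Series (a : nat -> R) k : (forall k, 0 <= a k) -> ex_series a -> a k <= Series a.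
Proof.
  intros Ha Hex. rewrite (Series_incr_n a (S k)) by (lia || exact Hex). simpl pred.
  assert (Hsum : forall N, 0 <= sum_f_R0 a N).
  { induction N; simpl; [apply Ha|]. specialize (Ha (S N)). lra. }
  assert (Hterm : a k <= sum_f_R0 a k).
  { destruct k; simpl; [lra|]. specialize (Hsum k). lra. }
  pose proof (Series_nonneg (fun j => a (S k + j)%nat) (fun j => Ha _)
                (proj1 (ex_series_incr_n a (S k)) Hex)).
  lra.
Qed.

Lemma tail_small (a : nat -> R) : ex_series a ->
  forall eps, 0 < eps -> exists K, forall N, (K <= N)%nat -> Series (fun k => a (N + k)%nat) < eps.
Proof.
  intros Hex eps Heps.
  pose proof (Series_correct a Hex) as Hs. apply is_series_Reals in Hs.
  destruct (Hs eps Heps) as [N0 HN0].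
  exists (S N0). intros N HN. destruct N as [|N]; [lia|].
  specialize (HN0 N ltac:(lia)). unfold Rdist in HN0.
  rewrite (Series_incr_n a (S N)) in HN0 by (lia || exact Hex). simpl pred in HN0.
  apply Rabs_lt_between in HN0. lra.
Qed.

Lemma Series_dominated (a b : nat -> R) : (forall k, 0 <= a k <= b k) -> ex_series b ->
  ex_series a /\ Series a <= Series b.
Proof.
  intros Hab Hb. split; [|apply Series_le; auto].
  apply (ex_series_le a b); auto. intros k. unfold norm; simpl.
  rewrite Rabs_pos_eq; apply Hab.
Qed.

Lemma Series_weighted_le (a c : nat -> R) K d C :
  (forall k, 0 <= a k) -> ex_series a -> 0 <= d ->
  (forall k, 0 <= c k <= C) -> (forall k, (k < K)%nat -> c k <= d) ->
  ex_series (fun k => c k * a k) /\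
  Series (fun k => c k * a k) <= d * Series a + C * Series (fun k => a (K + k)%nat).
Proof.
  intros Ha Hex Hd Hc HcK.
  set (t := fun k => if Nat.ltb k K then 0 else a k).
  assert (Ht : ex_series t /\ Series t = Series (fun k => a (K + k)%nat)).
  { assert (Htail : forall k, t (K + k)%nat = a (K + k)%nat).
    { intros k. unfold t. destruct (Nat.ltb_spec (K + k) K); [lia|reflexivity]. }
    split.
    - apply (ex_series_incr_n t K). apply (ex_series_ext (fun k => a (K + k)%nat)).
      + intros k. symmetry. apply Htail.
      + apply ex_series_incr_n, Hex.
    - rewrite (Series_incr_n_aux t K).
      + apply Series_ext, Htail.
      + intros k Hk. unfold t. destruct (Nat.ltb_spec k K); [reflexivity|lia]. }
  destruct Ht as [Hext HSt].
  assert (Hda : ex_series (fun k => d * a k)) by exact (ex_series_scal_l d a Hex).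
  assert (HCt : ex_series (fun k => C * t k)) by exact (ex_series_scal_l C t Hext).
  rewrite <- HSt, <- !Series_scal_l, <- Series_plus by assumption.
  apply Series_dominated.
  - intros k. pose proof (Hc k). pose proof (Ha k). split; [nra|]. unfold t.
    destruct (Nat.ltb_spec k K).
    + specialize (HcK k ltac:(lia)). nra.
    + nra.
  - exact (ex_series_plus _ _ Hda HCt).
Qed.

Lemma lim0_eventually (a : nat -> R) : is_lim_seq a 0 ->
  forall eps, 0 < eps -> exists K, forall k, (K <= k)%nat -> a k < eps.
Proof.
  intros H eps Heps. apply is_lim_seq_spec in H.
  destruct (H (mkposreal eps Heps)) as [N HN]. exists N. intros k Hk.
  specialize (HN k Hk). simpl in HN. apply Rabs_lt_between in HN. lra.
Qed.

Lemma prefix_bound (a : nat -> R) N : exists B, forall k, (k < N)%nat -> a k <= B.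
Proof.
  induction N as [|N [B HB]].
  - exists 0. intros; lia.
  - exists (Rmax B (a N)). intros k Hk.
    destruct (Nat.eq_dec k N) as [->|Hn]; [apply Rmax_r|].
    eapply Rle_trans; [apply HB; lia|apply Rmax_l].
Qed.

Lemma lim0_bounded (a : nat -> R) : is_lim_seq a 0 -> exists B, forall k, a k <= B.
Proof.
  intros H. destruct (lim0_eventually a H 1 Rlt_0_1) as [N HN].
  destruct (prefix_bound a N) as [B HB]. exists (Rmax B 1). intros k.
  destruct (Nat.lt_ge_cases k N).
  - eapply Rle_trans; [apply HB; auto|apply Rmax_l].
  - eapply Rle_trans; [|apply Rmax_r]. left; apply HN; lia.
Qed.

Lemma sup_bounds (a : nat -> R) B : (forall k, 0 <= a k <= B) ->
  (forall k, a k <= real (Lub_Rbar (fun r => exists n, r = a n))) /\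
  real (Lub_Rbar (fun r => exists n, r = a n)) <= B.
Proof.
  intros H. destruct (Lub_Rbar_correct (fun r => exists n, r = a n)) as [Hub Hl].
  assert (Hb : Rbar_le (Lub_Rbar (fun r => exists n, r = a n)) B).
  { apply Hl. intros x [n ->]. apply H. }
  assert (Ha : forall k, Rbar_le (a k) (Lub_Rbar (fun r => exists n, r = a n))).
  { intros k. apply Hub. exists k; reflexivity. }
  specialize (Ha 0%nat) as Ha0. pose proof (H 0%nat).
  destruct (Lub_Rbar (fun r => exists n, r = a n)); simpl in *; try contradiction.
  split; [exact Ha|exact Hb].
Qed.

Lemma Cmod_scal (r : R) (z : C) : 0 <= r -> Cmod (Cmult (RtoC r) z) = r * Cmod z.
Proof. intros. rewrite Cmod_mult, Cmod_R, Rabs_pos_eq; auto. Qed.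

Lemma Cmod_sub_le (a b : C) : Cmod (Cminus a b) <= Cmod a + Cmod b.
Proof. unfold Cminus. rewrite <- (Cmod_opp b). apply Cmod_triangle. Qed.

Lemma Cmod_le_sub (a b : C) : Cmod a <= Cmod b + Cmod (Cminus a b).
Proof. replace a with (Cplus b (Cminus a b)) at 1 by ring. apply Cmod_triangle. Qed.

Lemma Cminus_diag (a : C) : Cminus a a = RtoC 0.
Proof. ring. Qed.

Definition admissible (S : seqspace) : Prop := forall p, S = lp p -> 1 <= p.

Lemma coord_le_normX S z k : admissible S -> inX S z -> Cmod (z k) <= normX S z.
Proof.
  intros HS Hz. destruct S as [|p]; simpl in *.
  - destruct (lim0_bounded _ Hz) as [B HB].
    apply (sup_bounds (fun n => Cmod (z n)) B). intros; split; [apply Cmod_ge_0|auto].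
  - pose proof (HS p eq_refl) as Hp.
    rewrite <- (rpow_inv (Cmod (z k)) p) by (lra || apply Cmod_ge_0).
    apply rpow_le; [apply Rinv_0_lt_compat; lra|]. split; [apply rpow_nonneg|].
    apply (term_le_Series (fun n => rpow (Cmod (z n)) p)); auto. intros; apply rpow_nonneg.
Qed.

Lemma inX_sub S x y : admissible S -> inX S x -> inX S y -> inX S (seq_sub x y).
Proof.
  intros HS Hx Hy. destruct S as [|p]; simpl in *; unfold seq_sub.
  - apply is_lim_seq_le_le with (u := fun _ => 0) (w := fun k => Cmod (x k) + Cmod (y k)).
    + intros k. split; [apply Cmod_ge_0|apply Cmod_sub_le].
    + apply is_lim_seq_const.
    + replace (Finite 0) with (Finite (0 + 0)) by (f_equal; ring).
      apply is_lim_seq_plus'; auto.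
  - pose proof (HS p eq_refl) as Hp.
    apply (Series_dominated _ (fun k => rpow 2 p * (rpow (Cmod (x k)) p + rpow (Cmod (y k)) p))).
    + intros k. split; [apply rpow_nonneg|].
      eapply Rle_trans; [apply rpow_le; [lra|]; split; [apply Cmod_ge_0|apply Cmod_sub_le]|].
      apply rpow_add_le; [lra|apply Cmod_ge_0|apply Cmod_ge_0].
    + exact (ex_series_scal_l _ _ (ex_series_plus _ _ Hx Hy)).
Qed.

Definition zero_seq : nat -> C := fun _ => RtoC 0.

Definition e0 : nat -> C := fun k => match k with O => RtoC 1 | _ => RtoC 0 end.

Lemma inX_zero S : inX S zero_seq.
Proof.
  destruct S as [|p]; simpl; unfold zero_seq.
  - apply (is_lim_seq_ext (fun _ => 0)); [intros; rewrite Cmod_0; auto|apply is_lim_seq_const].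
  - apply (ex_series_ext (fun _ => 0)); [intros; rewrite Cmod_0, rpow_0; auto|apply ex_series_zero].
Qed.

Lemma inX_e0 S : inX S e0.
Proof.
  destruct S as [|p]; simpl.
  - apply (is_lim_seq_incr_n _ 1). apply (is_lim_seq_ext (fun _ => 0)); [|apply is_lim_seq_const].
    intros n. rewrite Nat.add_1_r. simpl. rewrite Cmod_0. auto.
  - apply (ex_series_incr_n _ 1). apply (ex_series_ext (fun _ => 0)); [|apply ex_series_zero].
    intros n. simpl. rewrite Cmod_0, rpow_0. auto.
Qed.

Lemma normX_c0_le z B : (forall k, Cmod (z k) <= B) -> normX c0 z <= B.
Proof.
  intros Hz. apply (sup_bounds (fun n => Cmod (z n)) B).
  intros k. split; [apply Cmod_ge_0|apply Hz].
Qed.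

Lemma normX_lp_lt p z e : 0 < p -> 0 < e ->
  Series (fun k => rpow (Cmod (z k)) p) < rpow e p ->
  0 <= Series (fun k => rpow (Cmod (z k)) p) -> normX (lp p) z < e.
Proof.
  intros Hp He Hlt Hnn. simpl. rewrite <- (rpow_inv e p) by lra.
  apply rpow_lt; [apply Rinv_0_lt_compat; lra|lra].
Qed.

Lemma open_coord_bounded S r : admissible S ->
  openX S (fun x => inX S x /\ exists eps, 0 < eps /\ forall k, Cmod (x k) <= r - eps).
Proof.
  intros HS. split; [intros x [Hx _]; exact Hx|].
  intros x [Hx [eps [Heps Hb]]]. exists (eps / 2). split; [lra|].
  intros z Hz Hn. split; [exact Hz|]. exists (eps / 2). split; [lra|]. intros k.
  pose proof (coord_le_normX S (seq_sub z x) k HS (inX_sub S z x HS Hz Hx)).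
  pose proof (Cmod_le_sub (z k) (x k)). pose proof (Hb k). unfold seq_sub in *. lra.
Qed.

Lemma open_coord0_ball S c r : admissible S ->
  openX S (fun x => inX S x /\ Cmod (Cminus (x 0%nat) c) < r).
Proof.
  intros HS. split; [intros x [Hx _]; exact Hx|].
  intros x [Hx Hb]. exists (r - Cmod (Cminus (x 0%nat) c)). split; [lra|].
  intros z Hz Hn. split; [exact Hz|].
  pose proof (coord_le_normX S (seq_sub z x) 0 HS (inX_sub S z x HS Hz Hx)).
  unfold seq_sub in *.
  replace (Cminus (z 0%nat) c) with
    (Cplus (Cminus (z 0%nat) (x 0%nat)) (Cminus (x 0%nat) c)) by ring.
  pose proof (Cmod_triangle (Cminus (z 0%nat) (x 0%nat)) (Cminus (x 0%nat) c)). lra.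
Qed.

(** Weighted backward shifts described by the products of their weights. *)

Section WeightedShift.

(* [W m] stands for the product [w_1 ... w_m] (with [W 0] a normalisation);
   the weights are recovered as quotients of consecutive values. *)
Variable W : nat -> R.
Hypothesis W_pos : forall m, 0 < W m.

Definition weight (k : nat) : R :=
  match k with O => 1 | S k' => W (S k') / W k' end.

Lemma weight_pos k : 0 < weight k.
Proof. destruct k; simpl; [lra|]. apply Rdiv_lt_0_compat; apply W_pos. Qed.

(* [B_w^n] multiplies coordinate [m + n] by [W (m + n) / W m] and moves it to
   position [m]; [ratio n m] is the inverse factor. *)
Definition ratio (n m : nat) : R := W m / W (m + n).

Lemma ratio_nonneg n m : 0 <= ratio n m.
Proof. left. apply Rdiv_lt_0_compat; apply W_pos. Qed.

Lemma iter_Bw n x m :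
  Nat.iter n (Bw weight) x m = Cmult (RtoC (W (m + n) / W m)) (x (m + n)%nat).
Proof.
  revert m. induction n as [|n IH]; intros m.
  - simpl. rewrite Nat.add_0_r. pose proof (W_pos m).
    replace (W m / W m) with 1 by (field; lra). symmetry; apply Cmult_1_l.
  - rewrite Nat.iter_succ. unfold Bw at 1. rewrite IH, Cmult_assoc, <- RtoC_mult.
    replace (S m + n)%nat with (m + S n)%nat by lia.
    pose proof (W_pos m); pose proof (W_pos (S m)).
    simpl weight. f_equal. f_equal. field. lra.
Qed.

Definition preimage (u y : nat -> C) (n k : nat) : C :=
  if Nat.ltb k n then u k else Cmult (RtoC (ratio n (k - n))) (y (k - n)%nat).

Lemma preimage_lo u y n k : (k < n)%nat -> preimage u y n k = u k.
Proof. intros H. unfold preimage. destruct (Nat.ltb_spec k n); [reflexivity|lia]. Qed.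

Lemma preimage_hi u y n m : preimage u y n (n + m) = Cmult (RtoC (ratio n m)) (y m).
Proof.
  unfold preimage. destruct (Nat.ltb_spec (n + m) n); [lia|].
  replace (n + m - n)%nat with m by lia. reflexivity.
Qed.

Lemma iter_preimage u y n : Nat.iter n (Bw weight) (preimage u y n) = y.
Proof.
  apply functional_extensionality. intros m.
  rewrite iter_Bw, (Nat.add_comm m n), preimage_hi, Cmult_assoc, <- RtoC_mult.
  unfold ratio. rewrite (Nat.add_comm n m).
  pose proof (W_pos m); pose proof (W_pos (m + n)).
  replace (W (m + n) / W m * (W m / W (m + n))) with 1 by (field; lra).
  apply Cmult_1_l.
Qed.

(* If [W r <= W 0] for infinitely many [r], then [B_w^r] maps the ball of radius
   [1/3] around [0] into the complement of the ball of radius [1/3] around [e_0]: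
   indeed [(B_w^r x)_0 = (W r / W 0) x_r] is then no larger than [x_r]. *)
Lemma not_mixing_of_returns S : admissible S ->
  (forall N, exists r, (N <= r)%nat /\ W r <= W 0) -> ~ mixing S (Bw weight).
Proof.
  intros HS Hret Hmix.
  assert (Hsmall : nonempty (fun x => inX S x /\
                     exists eps, 0 < eps /\ forall k, Cmod (x k) <= / 3 - eps)).
  { exists zero_seq. split; [apply inX_zero|]. exists (/ 3). split; [lra|].
    intros k. unfold zero_seq. rewrite Cmod_0. lra. }
  assert (Hnear : nonempty (fun x => inX S x /\ Cmod (Cminus (x 0%nat) (RtoC 1)) < / 3)).
  { exists e0. split; [apply inX_e0|]. simpl. rewrite Cminus_diag, Cmod_0. lra. }
  destruct (Hmix _ _ (open_coord_bounded S (/ 3) HS) Hsmall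
              (open_coord0_ball S (RtoC 1) (/ 3) HS) Hnear) as [N HN].
  destruct (Hret N) as [r [Hr HWr]].
  destruct (HN r Hr) as [x [[_ [eps [Heps Hb]]] [_ Hv]]].
  rewrite iter_Bw in Hv. simpl Nat.add in Hv.
  set (z := Cmult (RtoC (W r / W 0)) (x r)) in Hv.
  assert (Hz : Cmod z <= Cmod (x r)).
  { pose proof (W_pos r); pose proof (W_pos 0).
    unfold z. rewrite Cmod_scal by (left; apply Rdiv_lt_0_compat; lra).
    assert (W r / W 0 <= 1) by (apply Rle_div_l; lra).
    pose proof (Cmod_ge_0 (x r)). nra. }
  pose proof (Cmod_le_sub (RtoC 1) z) as H1. rewrite Cmod_1 in H1.
  replace (Cminus (RtoC 1) z) with (Copp (Cminus z (RtoC 1))) in H1 by ring.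
  rewrite Cmod_opp in H1. pose proof (Hb r). lra.
Qed.

Variable M : R.
Hypothesis ratio_control : forall K d, 0 < d -> exists n, (K <= n)%nat /\
  (forall m, ratio n m <= M) /\ (forall m, (m < K)%nat -> ratio n m <= d).

Lemma bound_nonneg : 0 <= M.
Proof.
  destruct (ratio_control 0 1 Rlt_0_1) as [n [_ [HM _]]].
  apply (Rle_trans _ (ratio n 0)); [apply ratio_nonneg|apply HM].
Qed.

Lemma preimage_in_c0 u y n : (forall m, ratio n m <= M) ->
  inX c0 y -> inX c0 (preimage u y n).
Proof.
  intros HM Hy. simpl in *. apply (is_lim_seq_incr_n _ n).
  apply is_lim_seq_le_le with (u := fun _ => 0) (w := fun k => M * Cmod (y k)).
  - intros k. rewrite (Nat.add_comm k n), preimage_hi, Cmod_scal by apply ratio_nonneg.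
    split; [apply Rmult_le_pos; [apply ratio_nonneg|apply Cmod_ge_0]|].
    apply Rmult_le_compat_r; [apply Cmod_ge_0|apply HM].
  - apply is_lim_seq_const.
  - replace (Finite 0) with (Rbar_mult M 0) by (simpl; f_equal; ring).
    apply is_lim_seq_scal_l. exact Hy.
Qed.

(* In [c_0]: [x - u] vanishes below [n], and beyond it equals [ratio * y - tail of u];
   both terms are below [e/4], the first because [y] is small beyond [K] and the
   ratio is small below [K]. *)
Lemma preimage_close_c0 u y e : inX c0 u -> inX c0 y -> 0 < e ->
  exists n, inX c0 (preimage u y n) /\ normX c0 (seq_sub (preimage u y n) u) < e.
Proof.
  intros Hu Hy He. pose proof bound_nonneg as HM0.
  destruct (lim0_eventually _ Hu (e / 4)) as [K1 HK1]; [lra|].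
  destruct (lim0_bounded _ Hy) as [Y HY].
  assert (HY0 : 0 <= Y) by (pose proof (Cmod_ge_0 (y 0%nat)); pose proof (HY 0%nat); lra).
  destruct (lim0_eventually _ Hy (e / 4 / (M + 1))) as [K2 HK2].
  { apply Rdiv_lt_0_compat; lra. }
  set (K := Nat.max K1 K2).
  destruct (ratio_control K (e / 4 / (Y + 1))) as [n [HKn [HM Hd]]].
  { apply Rdiv_lt_0_compat; lra. }
  exists n. split; [apply preimage_in_c0; assumption|].
  apply Rle_lt_trans with (e / 2); [|lra]. apply normX_c0_le. intros k. unfold seq_sub.
  destruct (Nat.lt_ge_cases k n).
  - rewrite preimage_lo, Cminus_diag, Cmod_0 by assumption. lra.
  - replace k with (n + (k - n))%nat by lia. set (m := (k - n)%nat).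
    rewrite preimage_hi.
    eapply Rle_trans; [apply Cmod_sub_le|]. rewrite Cmod_scal by apply ratio_nonneg.
    assert (Hu_small : Cmod (u (n + m)%nat) < e / 4) by (apply HK1; lia).
    assert (Hy_small : ratio n m * Cmod (y m) <= e / 4).
    { pose proof (ratio_nonneg n m); pose proof (Cmod_ge_0 (y m)).
      destruct (Nat.lt_ge_cases m K) as [HmK|HmK].
      - apply (Rle_trans _ (e / 4 / (Y + 1) * Y)).
        + apply Rmult_le_compat; auto.
        + rewrite Rmult_comm. apply mul_frac_le; lra.
      - apply (Rle_trans _ (M * (e / 4 / (M + 1)))).
        + apply Rmult_le_compat; auto. left; apply HK2; lia.
        + apply mul_frac_le; lra. }
    lra.
Qed.

Lemma preimage_in_lp p u y n : 0 < p -> (forall m, ratio n m <= M) ->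
  inX (lp p) y -> inX (lp p) (preimage u y n).
Proof.
  intros Hp HM Hy. simpl in *. apply (ex_series_incr_n _ n).
  apply (Series_dominated _ (fun k => rpow M p * rpow (Cmod (y k)) p));
    [|exact (ex_series_scal_l _ _ Hy)].
  intros k. rewrite preimage_hi, Cmod_scal by apply ratio_nonneg.
  rewrite rpow_mult by (apply ratio_nonneg || apply Cmod_ge_0).
  pose proof (rpow_nonneg (ratio n k) p); pose proof (rpow_nonneg (Cmod (y k)) p).
  split; [nra|]. apply Rmult_le_compat_r; [assumption|].
  apply rpow_le; [exact Hp|]. split; [apply ratio_nonneg|apply HM].
Qed.

Lemma preimage_gap_lp p u y n : 0 < p -> inX (lp p) u ->
  ex_series (fun m => rpow (ratio n m) p * rpow (Cmod (y m)) p) ->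
  ex_series (fun k => rpow (Cmod (seq_sub (preimage u y n) u k)) p) /\
  Series (fun k => rpow (Cmod (seq_sub (preimage u y n) u k)) p) <=
    rpow 2 p * (Series (fun m => rpow (ratio n m) p * rpow (Cmod (y m)) p)
                + Series (fun m => rpow (Cmod (u (n + m)%nat)) p)).
Proof.
  intros Hp Hu Hry. simpl in Hu.
  set (a := fun k => rpow (Cmod (seq_sub (preimage u y n) u k)) p).
  set (ry := fun m => rpow (ratio n m) p * rpow (Cmod (y m)) p) in *.
  set (tu := fun m => rpow (Cmod (u (n + m)%nat)) p).
  assert (Htu : ex_series tu) by exact (proj1 (ex_series_incr_n _ n) Hu).
  assert (Hsum : ex_series (fun m => ry m + tu m)) by exact (ex_series_plus _ _ Hry Htu).
  assert (Hdom : forall m, 0 <= a (n + m)%nat <= rpow 2 p * (ry m + tu m)).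
  { intros m. split; [apply rpow_nonneg|]. unfold a, seq_sub. rewrite preimage_hi.
    eapply Rle_trans.
    { apply rpow_le; [exact Hp|]. split; [apply Cmod_ge_0|apply Cmod_sub_le]. }
    rewrite Cmod_scal by apply ratio_nonneg.
    unfold ry, tu. rewrite <- rpow_mult by (apply ratio_nonneg || apply Cmod_ge_0).
    apply rpow_add_le; [exact Hp| |apply Cmod_ge_0].
    apply Rmult_le_pos; [apply ratio_nonneg|apply Cmod_ge_0]. }
  destruct (Series_dominated _ _ Hdom (ex_series_scal_l _ _ Hsum)) as [Hexa HSa].
  assert (Hlow : forall k, (k < n)%nat -> a k = 0).
  { intros k Hk. unfold a, seq_sub. rewrite preimage_lo, Cminus_diag, Cmod_0 by exact Hk.
    apply rpow_0. }
  split; [exact (proj2 (ex_series_incr_n a n) Hexa)|].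
  rewrite (Series_incr_n_aux a n Hlow), <- Series_plus by assumption.
  rewrite <- Series_scal_l. exact HSa.
Qed.

(* In [l^p], [p >= 1]: the error budget [e^p] is split in three parts, controlling
   [ratio^p |y|^p] below [K] (ratios small), beyond [K] (tail of [y] small), and
   the tail of [u] beyond [n >= K]. *)
Lemma preimage_close_lp p u y e : 1 <= p -> inX (lp p) u -> inX (lp p) y -> 0 < e ->
  exists n, inX (lp p) (preimage u y n) /\ normX (lp p) (seq_sub (preimage u y n) u) < e.
Proof.
  intros Hp Hu Hy He. pose proof bound_nonneg as HM0.
  set (Y := fun k => rpow (Cmod (y k)) p).
  set (C2 := rpow 2 p). set (CM := rpow M p). set (E := rpow e p).
  assert (HC2 : 0 < C2) by (apply rpow_pos; lra).
  assert (HCM : 0 <= CM) by apply rpow_nonneg.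
  assert (HE : 0 < E) by (apply rpow_pos; lra).
  assert (HY : forall k, 0 <= Y k) by (intros; apply rpow_nonneg).
  set (SY := Series Y).
  assert (HSY : 0 <= SY) by (apply Series_nonneg; assumption).
  set (eps := E / (3 * C2)).
  assert (Heps : 0 < eps) by (apply Rdiv_lt_0_compat; lra).
  destruct (tail_small Y Hy (eps / (CM + 1))) as [K1 HK1].
  { apply Rdiv_lt_0_compat; lra. }
  destruct (tail_small _ Hu eps Heps) as [K2 HK2].
  set (K := Nat.max K1 K2). set (d := Rmin 1 (eps / (SY + 1))).
  assert (Hd : 0 < d) by (apply Rmin_glb_lt; [lra|apply Rdiv_lt_0_compat; lra]).
  destruct (ratio_control K d Hd) as [n [HKn [HM Hsmall]]].
  assert (Hc : forall m, 0 <= rpow (ratio n m) p <= CM).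
  { intros m. split; [apply rpow_nonneg|].
    apply rpow_le; [lra|]. split; [apply ratio_nonneg|apply HM]. }
  assert (HcK : forall m, (m < K)%nat -> rpow (ratio n m) p <= d).
  { intros m Hm. specialize (Hsmall m Hm). assert (Hd1 : d <= 1) by apply Rmin_l.
    apply (Rle_trans _ (ratio n m)); [|exact Hsmall].
    apply rpow_le_base; [exact Hp|]. split; [apply ratio_nonneg|lra]. }
  destruct (Series_weighted_le Y (fun m => rpow (ratio n m) p) K d CM HY Hy
              ltac:(lra) Hc HcK) as [Hry HSry].
  destruct (preimage_gap_lp p u y n ltac:(lra) Hu Hry) as [Hgap HSgap].
  exists n. split; [apply preimage_in_lp; [lra|assumption|assumption]|].
  apply normX_lp_lt; [lra|exact He| |apply Series_nonneg; [intros; apply rpow_nonneg|exact Hgap]].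
  assert (HdSY : d * SY <= eps).
  { apply (Rle_trans _ (eps / (SY + 1) * SY)).
    - apply Rmult_le_compat_r; [exact HSY|apply Rmin_r].
    - rewrite Rmult_comm. apply mul_frac_le; lra. }
  assert (HtailY : CM * Series (fun k => Y (K + k)%nat) <= eps).
  { apply (Rle_trans _ (CM * (eps / (CM + 1)))); [|apply mul_frac_le; lra].
    apply Rmult_le_compat_l; [exact HCM|]. left; apply HK1; lia. }
  assert (HtailU : Series (fun k => rpow (Cmod (u (n + k)%nat)) p) < eps) by (apply HK2; lia).
  change (Series (fun m => rpow (ratio n m) p * rpow (Cmod (y m)) p))
    with (Series (fun m => rpow (ratio n m) p * Y m)) in HSgap.
  fold SY in HSry. fold C2 in HSgap. fold E.
  apply (Rle_lt_trans _ _ _ HSgap).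
  replace E with (C2 * (3 * eps)) by (unfold eps; field; lra).
  apply Rmult_lt_compat_l; [exact HC2|]. lra.
Qed.

Lemma strongly_tt_of_ratio_control S : admissible S -> strongly_tt S (Bw weight).
Proof.
  intros HS U [HUX HUopen] [u Hu] y Hy _.
  destruct (HUopen u Hu) as [e [He Hball]].
  assert (Hclose : exists n, inX S (preimage u y n) /\
                     normX S (seq_sub (preimage u y n) u) < e).
  { destruct S as [|p].
    - apply preimage_close_c0; auto.
    - apply preimage_close_lp; auto. }
  destruct Hclose as [n [Hx Hnorm]].
  exists n, (preimage u y n). split; [apply Hball; assumption|apply iter_preimage].
Qed.

End WeightedShift.

(** The integer profile: the weights will be [w_k = 2^(profile k - profile (k - 1))]. *)

Section Profile.
Local Open Scope nat_scope.

(* The time scale of the [i]-th tent; it grows fast enough that each tent is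
   over before the next one starts to matter. *)
Fixpoint block (i : nat) : nat :=
  match i with
  | O => 1
  | S i' => (i' + 2) * block i' + 2 * i' + 2
  end.

Lemma block_pos i : 1 <= block i.
Proof. induction i; simpl; nia. Qed.

Lemma block_ge i : 2 * i <= block i.
Proof. induction i; simpl; nia. Qed.

Lemma block_succ i : (i + 1) * block i + (i + 1) <= block (S i).
Proof. simpl. nia. Qed.

Lemma block_mono i j : i <= j -> block i <= block j.
Proof. induction 1; [lia|]. pose proof (block_succ m). nia. Qed.

Lemma block_tent_end i j : i < j -> (i + 1) * block i <= block j.
Proof.
  intros H. pose proof (block_succ i). pose proof (block_mono (S i) j H). nia.
Qed.

Lemma block_gap j i : j < i -> (j + 1) * block j + i <= block i.
Proof.
  induction 1.
  - pose proof (block_succ j). lia.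
  - simpl. pose proof (block_pos m). nia.
Qed.

(* The [i]-th tent: it climbs with slope one to height [i], reached at time
   [block i], then descends by one every [block i] steps, vanishing from time
   [(i + 1) * block i] on. *)
Definition tent (i m : nat) : nat := Nat.min (m + i - block i) (i + 1 - m / block i).

Lemma tent_succ i m : tent i (S m) <= tent i m + 1.
Proof.
  unfold tent. pose proof (block_pos i).
  assert (m / block i <= S m / block i) by (apply Nat.Div0.div_le_mono; lia).
  lia.
Qed.

Lemma tent_shift i m d : d <= block i -> tent i m <= tent i (m + d) + 1.
Proof.
  intros Hd. unfold tent. pose proof (block_pos i).
  assert ((m + d) / block i <= m / block i + 1).
  { assert ((m + d) / block i <= (m + 1 * block i) / block i)
      by (apply Nat.Div0.div_le_mono; lia).
    rewrite Nat.div_add in H0 by lia. lia. }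
  lia.
Qed.

Lemma tent_le_height i m : tent i m <= i.
Proof.
  unfold tent. pose proof (block_pos i). destruct (Nat.lt_ge_cases m (block i)); [lia|].
  assert (1 <= m / block i) by (apply Nat.div_le_lower_bound; lia). lia.
Qed.

Lemma tent_le_time i m : tent i m <= m.
Proof. unfold tent. pose proof (block_ge i). lia. Qed.

Lemma tent_top j m : m < block j -> tent j (m + block j) = j.
Proof.
  intros H. unfold tent. pose proof (block_pos j).
  replace (m + block j) with (m + 1 * block j) by lia.
  rewrite Nat.div_add by lia. rewrite Nat.div_small by lia. lia.
Qed.

Lemma tent_before i m : m < i -> tent i m = 0.
Proof. intros H. unfold tent. pose proof (block_ge i). lia. Qed.

Lemma tent_after i m : (i + 1) * block i <= m -> tent i m = 0.
Proof.
  intros H. unfold tent. pose proof (block_pos i).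
  assert (i + 1 <= m / block i) by (apply Nat.div_le_lower_bound; lia).
  lia.
Qed.

Lemma tent_at_end i j : tent i ((j + 1) * block j) = 0.
Proof.
  destruct (Nat.lt_trichotomy i j) as [H|[H|H]].
  - apply tent_after. pose proof (block_tent_end i j H). nia.
  - subst. apply tent_after. lia.
  - unfold tent. pose proof (block_gap j i H). lia.
Qed.

Fixpoint max_tents (k m : nat) : nat :=
  match k with O => O | S k' => Nat.max (max_tents k' m) (tent k' m) end.

Lemma max_tents_ge k m i : i < k -> tent i m <= max_tents k m.
Proof.
  induction k; simpl; intros H; [lia|].
  destruct (Nat.eq_dec i k); [subst; lia|]. specialize (IHk ltac:(lia)). lia.
Qed.

Lemma max_tents_le k m B : (forall i, tent i m <= B) -> max_tents k m <= B.
Proof. intros H; induction k; simpl; [lia|]. specialize (H k). lia. Qed.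

(* The profile is the upper envelope of all tents (those with [i > m] vanish at [m]). *)
Definition profile (m : nat) : nat := max_tents (S m) m.

Lemma profile_ge i m : tent i m <= profile m.
Proof.
  unfold profile. destruct (Nat.le_gt_cases i m).
  - apply max_tents_ge; lia.
  - rewrite tent_before by lia. lia.
Qed.

Lemma profile_le m B : (forall i, tent i m <= B) -> profile m <= B.
Proof. intros; apply max_tents_le; auto. Qed.

Lemma profile_succ m : profile (S m) <= profile m + 1.
Proof.
  apply profile_le. intros i. pose proof (tent_succ i m). pose proof (profile_ge i m). lia.
Qed.

Lemma profile_le_time m : profile m <= m.
Proof. apply profile_le. intros i; apply tent_le_time. Qed.

Lemma profile_0 : profile 0 = 0.
Proof. pose proof (profile_le_time 0). lia. Qed.

(* Shifting by [block j] lowers the profile by at most one: the larger tents lose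
   at most one, and the smaller ones are dominated by the top of the [j]-th tent
   or have already ended. *)
Lemma profile_shift j m : profile m <= profile (m + block j) + 1.
Proof.
  apply profile_le. intros i. destruct (Nat.le_gt_cases j i).
  - pose proof (tent_shift i m (block j) (block_mono _ _ H)).
    pose proof (profile_ge i (m + block j)). lia.
  - destruct (Nat.lt_ge_cases m (block j)).
    + pose proof (tent_le_height i m). pose proof (tent_top j m H0).
      pose proof (profile_ge j (m + block j)). lia.
    + rewrite tent_after; [lia|]. pose proof (block_tent_end i j H). lia.
Qed.

Lemma profile_at_end j : profile ((j + 1) * block j) = 0.
Proof. apply Nat.le_0_r. apply profile_le. intros i. rewrite tent_at_end. lia. Qed.

Lemma profile_top j m : m < block j -> j <= profile (m + block j).
Proof. intros H. rewrite <- (tent_top j m H) at 1. apply profile_ge. Qed.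

End Profile.

Definition W2 (m : nat) : R := 2 ^ profile m.

Lemma W2_pos m : 0 < W2 m.
Proof. apply pow_lt. lra. Qed.

Lemma pow2_div_le a b c : (a <= b + c)%nat -> 2 ^ a / 2 ^ b <= 2 ^ c.
Proof.
  intros H. apply Rle_div_l; [apply pow_lt; lra|].
  rewrite <- pow_add. apply Rle_pow; [lra|lia].
Qed.

Lemma pow2_unbounded r : exists j, r <= 2 ^ j.
Proof.
  destruct (INR_unbounded r) as [j Hj]. exists j.
  pose proof (poly j 1 Rlt_0_1) as Hpoly. replace (1 + 1) with 2 in Hpoly by ring. lra.
Qed.

(* The weights are bounded by [2], since the profile grows by at most one per step. *)
Lemma weight_W2_le k : weight W2 k <= 2.
Proof.
  destruct k as [|k]; simpl; [lra|]. unfold W2.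
  rewrite <- (pow_1 2) at 3. apply pow2_div_le. apply profile_succ.
Qed.

(* Shifting by [block j] keeps the ratios below [2] (by [profile_shift]), and for [j]
   large makes them tiny on [[0, K)], where [profile <= K] while the shifted profile
   is at least [j] (by [profile_top]). *)
Lemma W2_ratio_control K d : 0 < d -> exists n, (K <= n)%nat /\
  (forall m, ratio W2 n m <= 2) /\ (forall m, (m < K)%nat -> ratio W2 n m <= d).
Proof.
  intros Hd. destruct (pow2_unbounded (2 ^ K / d)) as [j0 Hj0].
  set (j := (j0 + K)%nat).
  exists (block j). split; [pose proof (block_ge j); unfold j in *; lia|]. split.
  - intros m. unfold ratio, W2. rewrite <- (pow_1 2) at 3.
    apply pow2_div_le. apply profile_shift.
  - intros m Hm. unfold ratio, W2. apply Rle_div_l; [apply pow_lt; lra|].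
    assert (HK : 2 ^ profile m <= 2 ^ K).
    { apply Rle_pow; [lra|]. pose proof (profile_le_time m). lia. }
    assert (Hj : 2 ^ j0 <= 2 ^ profile (m + block j)).
    { apply Rle_pow; [lra|]. apply (Nat.le_trans _ j); [unfold j; lia|].
      apply profile_top. pose proof (block_ge j). unfold j in *; lia. }
    assert (Hdj : 2 ^ K <= d * 2 ^ j0).
    { replace (2 ^ K) with (2 ^ K / d * d) by (field; lra). nra. }
    nra.
Qed.

Lemma W2_returns N : exists r, (N <= r)%nat /\ W2 r <= W2 0.
Proof.
  exists ((N + 1) * block N)%nat. split.
  - pose proof (block_pos N). nia.
  - unfold W2. rewrite profile_at_end, profile_0. lra.
Qed.

Theorem theorem1p1 (S : seqspace) (HS : forall p, S = lp p -> 1 <= p) :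
  exists w : nat -> R,
    (forall n, 0 < w n) /\ (exists M, forall n, w n <= M) /\
    strongly_tt S (Bw w) /\ ~ mixing S (Bw w).
Proof.
  exists (weight W2). split; [|split; [|split]].
  - apply weight_pos, W2_pos.
  - exists 2. apply weight_W2_le.
  - apply (strongly_tt_of_ratio_control W2 W2_pos 2 W2_ratio_control S HS).
  - apply (not_mixing_of_returns W2 W2_pos S HS W2_returns).
Qed.
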